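(* Let $(M,g,S)$, $p$, $u$, $\varphi$, $\beta_3$ and $e_1,e_2$ be as in the context. Give each $v\in\beta_3$ coordinates $(x,y)$ by $v=xe_1+ye_2$. For $a\in\mathbb R$, the circle $k_3=\{v\in\beta_3:\tilde g(v,v)=a\}$ has the equation $$\frac{2\cos\varphi-1}{1-\cos\varphi}\,x^2+\frac{2\cos\varphi+1}{1+\cos\varphi}\,y^2=a.$$
   Context: $M$ is a 4-dimensional differentiable manifold with a positive definite metric $g$ and a tensor field $S$ of type $(1,1)$ whose components in some local coordinate system form the matrix with rows $(0,1,0,0)$, $(0,0,1,0)$, $(0,0,0,1)$, $(-1,0,0,0)$; hence $S^4=-\mathrm{id}$, and $g(Su,Sv)=g(u,v)$ for all vector fields $u,v$. The associated metric is $\tilde g(u,v)=g(u,Sv)+g(Su,v)$. Here $p\in M$, $u\in T_pM$ is a $g$-unit vector such that $\{u,Su,S^2u,S^3u\}$ is a basis of $T_pM$, $\varphi=\angle(u,Su)$ with respect to $g$ (so $\cos\varphi=g(u,Su)$; known: $\frac{\pi}{4}<\varphi<\frac{3\pi}{4}$), $\beta_3=\mathrm{span}\{u,S^3u\}$, and $e_1=\frac{1}{\sqrt{2(1-\cos\varphi)}}(u+S^3u)$, $e_2=\frac{1}{\sqrt{2(1+\cos\varphi)}}(-u+S^3u)$ (a $g$-orthonormal basis of $\beta_3$). *)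

From HB Require Import structures.
From mathcomp Require Import all_boot all_order all_algebra.
From mathcomp Require Import all_classical all_reals all_analysis.
Set Implicit Arguments. Unset Strict Implicit. Unset Printing Implicit Defensive.
Import Order.TTheory GRing.Theory Num.Theory.
Local Open Scope ring_scope.

(* Tangent space T_pM is modelled by column vectors 'cV[R]_4 in the local
   coordinate basis (d/dx^1, ..., d/dx^4). *)

(* The component matrix of S: rows (0,1,0,0),(0,0,1,0),(0,0,0,1),(-1,0,0,0);
   S acts on column vectors by  S v = Smx *m v. *)
Definition Smx {R : ringType} : 'M[R]_4 :=
  \matrix_(i < 4, j < 4)
    (if (i < 3)%N then ((j : nat) == i.+1)%:R else - ((j : nat) == 0%N)%:R).

Definition Sop {R : ringType} (v : 'cV[R]_4) : 'cV[R]_4 := Smx *m v.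

Definition gform {R : ringType} (G : 'M[R]_4) (u v : 'cV[R]_4) : R :=
  (u^T *m G *m v) 0 0.

Definition pos_def_metric {R : numDomainType} (G : 'M[R]_4) : Prop :=
  G^T = G /\ forall v : 'cV[R]_4, v != 0 -> 0 < gform G v v.

Definition gtilde {R : ringType} (G : 'M[R]_4) (u v : 'cV[R]_4) : R :=
  gform G u (Sop v) + gform G (Sop u) v.

(* {u, Su, S^2u, S^3u} is a basis of T_pM: the 4x4 matrix with these rows
   (transposed column vectors) has full row rank. *)
Definition S_basis {R : fieldType} (u : 'cV[R]_4) : bool :=
  row_free (\matrix_(i < 4) ((Smx ^+ i *m u)^T)).

From HB Require Import structures.
From mathcomp Require Import all_boot all_order all_algebra.
From mathcomp Require Import all_classical all_reals all_analysis.
From mathcomp Require Import ring.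
Import Order.TTheory GRing.Theory Num.Theory.
Local Open Scope ring_scope.

(* Write [v = alpha u + beta S^3 u] with [alpha = x p - y q], [beta = x p + y q],
   where [p], [q] are the normalising factors of [e1], [e2].  Since [S^4 = -1]
   and [S] is a [g]-isometry, [g(u, S^2 u) = g(S^2 u, S^4 u) = - g(u, S^2 u)]
   vanishes and [g(S^3 u, u) = g(S^4 u, S u) = - cos phi], so
   [tilde g(v, v) = 2 g(v, S v) = 2 ((alpha^2 + beta^2) cos phi - alpha beta)].
   Expanding in [x], [y] kills the mixed terms and leaves
   [2 p^2 (2 cos phi - 1) x^2 + 2 q^2 (2 cos phi + 1) y^2], with
   [2 p^2 = 1 / (1 - cos phi)] and [2 q^2 = 1 / (1 + cos phi)]. *)

Section CoordinateForms.
Variables (R : comNzRingType) (G : 'M[R]_4).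
Implicit Types (v w : 'cV[R]_4) (a : R).

Lemma Smx_exp4 : Smx ^+ 4 = - 1 :> 'M[R]_4.
Proof.
apply/matrixP => i j; rewrite !exprS expr0 mulr1 -!mulmxE.
do 4 (rewrite ?mxE ?big_ord_recr ?big_ord0 /=).
by case: i => [[|[|[|[|i]]]] ?] //=; case: j => [[|[|[|[|j]]]] ?] //=;
  rewrite /= ?mxE /=; ring.
Qed.

Lemma Sop_exp4 v : Sop (Sop (Sop (Sop v))) = - v.
Proof.
have Smx4 : Smx *m Smx *m Smx *m Smx = Smx ^+ 4 :> 'M[R]_4.
  by rewrite !exprS expr0 mulr1 -!mulmxE !mulmxA.
by rewrite /Sop !mulmxA Smx4 Smx_exp4 mulNmx mul1mx.
Qed.

Lemma SopD v w : Sop (v + w) = Sop v + Sop w.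
Proof. exact: mulmxDr. Qed.

Lemma SopZ a v : Sop (a *: v) = a *: Sop v.
Proof. by rewrite /Sop scalemxAr. Qed.

Lemma gformDl v w z : gform G (v + w) z = gform G v z + gform G w z.
Proof. by rewrite /gform linearD /= !mulmxDl mxE. Qed.

Lemma gformZl a v w : gform G (a *: v) w = a * gform G v w.
Proof. by rewrite /gform linearZ /= -!scalemxAl mxE. Qed.

Lemma gformDr v w z : gform G z (v + w) = gform G z v + gform G z w.
Proof. by rewrite /gform mulmxDr mxE. Qed.

Lemma gformZr a v w : gform G w (a *: v) = a * gform G w v.
Proof. by rewrite /gform -scalemxAr mxE. Qed.

Lemma gformNr v w : gform G w (- v) = - gform G w v.
Proof. by rewrite /gform mulmxN mxE. Qed.

Lemma gformC v w : G^T = G -> gform G v w = gform G w v.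
Proof.
move=> G_sym; rewrite /gform -[in RHS](trmxK (w^T *m G *m v)) [RHS]mxE.
by rewrite !trmx_mul trmxK G_sym mulmxA.
Qed.

End CoordinateForms.

Section SIsometry.
Variables (R : numDomainType) (G : 'M[R]_4).
Hypothesis G_sym : G^T = G.
Hypothesis gform_Sop : forall v w, gform G (Sop v) (Sop w) = gform G v w.
Implicit Types (u v : 'cV[R]_4) (alpha beta : R).

Lemma gtilde_diag v : gtilde G v v = 2 * gform G v (Sop v).
Proof. by rewrite /gtilde [gform G (Sop v) v]gformC // mulr2n mulrDl mul1r. Qed.

Lemma gform_Sop2 v : gform G v (Sop (Sop v)) = 0.
Proof.
have opp_self : gform G v (Sop (Sop v)) = - gform G v (Sop (Sop v)).
  by rewrite -[LHS]gform_Sop -[LHS]gform_Sop Sop_exp4 gformNr gformC.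
by apply/eqP; rewrite -eqNr -opp_self.
Qed.

Lemma gform_Sop3_Sop u : gform G (Sop (Sop (Sop u))) (Sop u) = 0.
Proof. by rewrite gform_Sop gformC // gform_Sop2. Qed.

Lemma gform_Sop3_id u : gform G (Sop (Sop (Sop u))) u = - gform G u (Sop u).
Proof. by rewrite -gform_Sop Sop_exp4 gformC // gformNr gformC. Qed.

Lemma gform_Sop_span_Sop3 u alpha beta :
  let v := alpha *: u + beta *: Sop (Sop (Sop u)) in
  gform G v (Sop v) =
    (alpha ^+ 2 + beta ^+ 2) * gform G u (Sop u) - alpha * beta * gform G u u.
Proof.
rewrite /= SopD !SopZ Sop_exp4.
rewrite !(gformDl, gformZl, gformDr, gformZr, gformNr).
rewrite gform_Sop3_Sop gform_Sop3_id.
by ring.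
Qed.

End SIsometry.

Lemma mul2_sqr_inv_sqrt_mul2 (R : rcfType) (z : R) :
  0 <= z -> 2 * (Num.sqrt (2 * z))^-1 ^+ 2 = z^-1.
Proof.
move=> z_ge0; rewrite exprVn sqr_sqrtr ?mulr_ge0 //.
by rewrite invfM mulrA divff ?mul1r // pnatr_eq0.
Qed.

Theorem theorem5p9 (R : realType) (G : 'M[R]_4) (u : 'cV[R]_4) (phi : R) :
  pos_def_metric G ->
  (forall v w : 'cV[R]_4, gform G (Sop v) (Sop w) = gform G v w) ->
  gform G u u = 1 ->
  S_basis u ->
  0 <= phi <= pi ->
  cos phi = gform G u (Sop u) ->
  pi / 4 < phi < 3 * pi / 4 ->
  let S3u := Sop (Sop (Sop u)) in
  let e1 := (Num.sqrt (2 * (1 - cos phi)))^-1 *: (u + S3u) in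
  let e2 := (Num.sqrt (2 * (1 + cos phi)))^-1 *: (- u + S3u) in
  forall a x y : R,
    let v := x *: e1 + y *: e2 in
    gtilde G v v = a <->
    (2 * cos phi - 1) / (1 - cos phi) * x ^+ 2
      + (2 * cos phi + 1) / (1 + cos phi) * y ^+ 2 = a.
Proof.
move=> [G_sym _] gform_Sop gform_uu _ _ cos_phi _ S3u e1 e2 a x y v.
set c := cos phi.
set p := (Num.sqrt (2 * (1 - c)))^-1; set q := (Num.sqrt (2 * (1 + c)))^-1.
have p_sqr : (1 - c)^-1 = 2 * p ^+ 2.
  by rewrite mul2_sqr_inv_sqrt_mul2 // subr_ge0 cos_le1.
have q_sqr : (1 + c)^-1 = 2 * q ^+ 2.
  by rewrite mul2_sqr_inv_sqrt_mul2 // -lerBlDl sub0r cos_geN1.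
have v_span : v = (x * p - y * q) *: u + (x * p + y * q) *: S3u.
  rewrite /v /e1 /e2 -/c -/p -/q; move: (S3u) => w.
  by apply/matrixP => i j; rewrite !mxE; ring.
rewrite gtilde_diag // v_span gform_Sop_span_Sop3 // gform_uu -cos_phi -/c.
rewrite p_sqr q_sqr; clearbody c p q.
by split=> <-; ring.
Qed.
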